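(* Let $A$ be a setoid, $B$ a setoid family over $A$ and $(C,a_C)$ a $P_B$-algebra. Let $w,w':W$, $\gamma:w\approx_Ww'$, $k:\mathsf{ImS}\,w\Rightarrow C$ and $k':\mathsf{ImS}\,w'\Rightarrow C$. Then there is a term of type \[ \mathsf{RecDef}\,w\,k\to\mathsf{RecDef}\,w'\,k'\to k\approx k'\circ\mathsf{ImS}_\gamma . \]
   Context: Setting: intensional Martin-Löf type theory with $\Pi$-types, record types and a universe $\mathsf U$ closed under $\Pi$ and containing intensional $\Sigma$-types, identity types, unit type, W-types and dependent W-types; propositions-as-types. For a W-type with constructor $\mathsf{sup}$, $\mathsf n,\mathsf b$ are node and branch functions. $\mathsf{DW}_{I,X,Y,d}:I\to\mathsf U$ denotes the dependent W-type: the inductive family with constructor $\mathsf{dsup}\,i\,x\,f:\mathsf{DW}\,i$ for $x:X\,i$ and $f:\prod_{y:Y\,i\,x}\mathsf{DW}(d\,i\,x\,y)$, and the usual dependent eliminator. A setoid $X$: type $X_0:\mathsf U$ with relation $\approx_X$ and proofs of reflexivity, symmetry, transitivity; $x:X$ means $x:X_0$. Extensional function $f:X\Rightarrow Y$: $f_0:X_0\to Y_0$ with a proof that it preserves $\approx$; $X\Rightarrow Y$ is a setoid with pointwise equality; $\circ$ is composition. A setoid family $B$ over setoid $A$: setoids $B\,a$ and transports $B_\alpha:B\,a\Rightarrow B\,a'$ for $\alpha:a\approx_Aa'$, functorial up to $\approx$, with $B_\alpha\approx B_{\alpha'}$ for all $\alpha,\alpha'$. Write $b\approx_\alpha b'$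 for $B_\alpha b\approx b'$. $P_BX$: setoid with underlying type $\sum_{a:A}(B\,a\Rightarrow X)$ and $(a,k)\approx(a',k'):=\sum_{\alpha:a\approx a'}k\approx k'\circ B_\alpha$. A $P_B$-algebra is a setoid $C$ with extensional $a_C:P_BC\Rightarrow C$. $W$: with $A_0,B_0$ underlying types and $\mathsf W:=\mathsf W(A_0,B_0)$, $\approx^Bw\,w':=\mathsf{DW}_{I,X,Y,d}(w,w')$ with $I:=\mathsf W\times\mathsf W$, $X(w,w'):=\mathsf nw\approx_A\mathsf nw'$, $Y(w,w')\alpha:=\sum_{b,b'}b\approx_\alpha b'$, $d(w,w')\alpha(b,b',\beta):=(\mathsf bwb,\mathsf bw'b')$. $W$: underlying type $\sum_{w:\mathsf W}\approx^Bw\,w$, $(w,\_)\approx_W(w',\_):=\approx^Bw\,w'$. $\mathsf n$, $\mathsf b$ induce extensional $\mathsf n:W\Rightarrow A$ and $\mathsf b\,w:B(\mathsf nw)\Rightarrow W$; for $\gamma:w\approx_Ww'$, $\mathsf n^\ast\gamma:\mathsf nw\approx_A\mathsf nw'$ denotes extensionality of $\mathsf n$ applied to $\gamma$. $\mathsf{ImS}\,w$ (for $w:W$): setoid with underlying type $B_0(\mathsf nw)$ and $b\approx b':=\mathsf bwb\approx_W\mathsf bwb'$; transport $\mathsf{ImS}_\gamma s:=B_{\mathsf n^\ast\gamma}s$ for $\gamma:w\approx_Ww'$. $e_w:B(\mathsf nw)\Rightarrow\mathsf{ImS}\,w$ has identity underlying function. A family $F:\prod_{s:\mathsf{ImS}w}\mathsf{ImS}(\mathsf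 bws)\Rightarrow C$ is coherent if $F\,s\approx(F\,s')\circ\mathsf{ImS}_\sigma$ for all $\sigma:s\approx s'$ in $\mathsf{ImS}\,w$; $\mathsf{CohMaps}\,w$ is the setoid of coherent families with pointwise equality. For $F:\mathsf{CohMaps}\,w$, $\mathsf{recst}\,w\,F:\mathsf{ImS}\,w\Rightarrow C$ is the extensional function $s\mapsto a_C(\mathsf n(\mathsf bws),(F\,s)\circ e_{\mathsf bws})$. For $k:\mathsf{ImS}\,w\Rightarrow C$, $\mathsf{RecDef}\,w\,k:=\mathsf{DW}_{I',X',Y',d'}(w,k)$ with $I':=\sum_{w:W}(\mathsf{ImS}w\Rightarrow C)$, $X'(w,k):=\sum_{F:\mathsf{CohMaps}w}k\approx\mathsf{recst}\,w\,F$, $Y'(w,k)(F,\_):=$ underlying type of $\mathsf{ImS}\,w$, $d'(w,k)(F,\_)s:=(\mathsf bws,F\,s)$. *)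

Set Implicit Arguments.
Unset Strict Implicit.

Record setoid := Setoid {
  car :> Type;
  eqv : car -> car -> Type;
  srefl : forall x, eqv x x;
  ssym : forall x y, eqv x y -> eqv y x;
  strans : forall x y z, eqv x y -> eqv y z -> eqv x z }.
Arguments eqv {s} _ _.
Arguments srefl {s} x.
Arguments ssym {s x y} _.
Arguments strans {s x y z} _ _.

Record extfun (X Y : setoid) := ExtFun {
  ap :> X -> Y;
  ap_ext : forall x x' : X, eqv x x' -> eqv (ap x) (ap x') }.
Arguments ap_ext {X Y} e {x x'} _.

Definition funS (X Y : setoid) : setoid.
Proof.
  refine (@Setoid (extfun X Y) (fun f g => forall x, eqv (f x) (g x)) _ _ _).
  - intros f x; apply srefl.
  - intros f g H x; apply ssym, H.
  - intros f g h H1 H2 x; exact (strans (H1 x) (H2 x)).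
Defined.

Definition comp (X Y Z : setoid) (g : extfun Y Z) (f : extfun X Y) : extfun X Z :=
  @ExtFun X Z (fun x => g (f x)) (fun x x' e => ap_ext g (ap_ext f e)).

Record setfam (A : setoid) := SetFam {
  fam :> A -> setoid;
  tr : forall a a' : A, eqv a a' -> extfun (fam a) (fam a');
  tr_refl : forall (a : A) (x : fam a), eqv (tr (srefl a) x) x;
  tr_trans : forall (a a' a'' : A) (al : eqv a a') (al' : eqv a' a'') (x : fam a),
      eqv (tr al' (tr al x)) (tr (strans al al') x);
  tr_irr : forall (a a' : A) (al al' : eqv a a') (x : fam a),
      eqv (tr al x) (tr al' x) }.
Arguments tr {A} s {a a'} _.

Lemma tr_inv (A : setoid) (B : setfam A) (a a' : A) (al : eqv a a')
  (b : B a') (b' : B a) : eqv (tr B (ssym al) b) b' -> eqv (tr B al b') b.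
Proof.
  intros e.
  eapply strans; [exact (ap_ext (tr B al) (ssym e))|].
  eapply strans; [apply tr_trans|].
  eapply strans; [apply (tr_irr (s:=B) _ (srefl a'))|].
  apply tr_refl.
Qed.

Definition PB_rel (A : setoid) (B : setfam A) (X : setoid)
  (p q : {a : A & extfun (B a) X}) : Type :=
  {al : eqv (projT1 p) (projT1 q) &
     eqv (s := funS (B (projT1 p)) X) (projT2 p) (comp (projT2 q) (tr B al))}.

Definition PB (A : setoid) (B : setfam A) (X : setoid) : setoid.
Proof.
  refine (@Setoid {a : A & extfun (B a) X} (@PB_rel A B X) _ _ _).
  - intros [a k]. exists (srefl a). intros b; simpl.
    apply (ap_ext k). exact (ssym (tr_refl (s:=B) b)).
  - intros [a k] [a' k'] [al H]; simpl in *.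
    exists (ssym al). intros b; simpl.
    eapply strans; [|exact (ssym (H (tr B (ssym al) b)))].
    apply (ap_ext k'). apply ssym. apply tr_inv. apply srefl.
  - intros [a k] [a' k'] [a'' k''] [al H] [al' H']; simpl in *.
    exists (strans al al'). intros b; simpl.
    eapply strans; [exact (H b)|].
    eapply strans; [exact (H' (tr B al b))|].
    apply (ap_ext k''). apply tr_trans.
Defined.

Inductive Wt (A0 : Type) (B0 : A0 -> Type) : Type :=
  sup : forall a : A0, (B0 a -> Wt B0) -> Wt B0.
Arguments sup {A0 B0} a f.

Definition node (A0 : Type) (B0 : A0 -> Type) (w : Wt B0) : A0 :=
  match w with sup a _ => a end.
Definition branch (A0 : Type) (B0 : A0 -> Type) (w : Wt B0) : B0 (node w) -> Wt B0 :=
  match w return B0 (node w) -> Wt B0 with sup a f => f end.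
Arguments node {A0 B0} w.
Arguments branch {A0 B0} w _.

Inductive DW (I : Type) (X : I -> Type) (Y : forall i, X i -> Type)
  (d : forall i (x : X i), Y i x -> I) : I -> Type :=
  dsup : forall (i : I) (x : X i), (forall y : Y i x, @DW I X Y d (d i x y)) -> @DW I X Y d i.
Arguments DW {I} X Y d _.
Arguments dsup {I X Y d} i x f.

Definition WB (A : setoid) (B : setfam A) : Type := @Wt (car A) (fun a => car (B a)).

Definition XB (A : setoid) (B : setfam A) (i : WB B * WB B) : Type :=
  eqv (node (fst i)) (node (snd i)).
Definition YB (A : setoid) (B : setfam A) (i : WB B * WB B) (al : XB i) : Type :=
  {b : B (node (fst i)) & {b' : B (node (snd i)) & eqv (tr B al b) b'}}.
Definition dB (A : setoid) (B : setfam A) (i : WB B * WB B) (al : XB i) (y : YB al)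
  : WB B * WB B :=
  (branch (fst i) (projT1 y), branch (snd i) (projT1 (projT2 y))).

Definition DWB (A : setoid) (B : setfam A) := DW (@XB A B) (@YB A B) (@dB A B).
Arguments DWB {A} B _.

Definition eqB (A : setoid) (B : setfam A) (w w' : WB B) : Type := DWB B (w, w').

Definition nstarI (A : setoid) (B : setfam A) (i : WB B * WB B) (p : DWB B i) : XB i :=
  match p in DW _ _ _ j return XB j with dsup _ x _ => x end.

Definition eqB_branch (A : setoid) (B : setfam A) (i : WB B * WB B) (p : DWB B i) :
  forall (s : B (node (fst i))) (s' : B (node (snd i))),
    eqv (tr B (nstarI p) s) s' -> DWB B (branch (fst i) s, branch (snd i) s') :=
  match p as p0 in DW _ _ _ j return
    forall (s : B (node (fst j))) (s' : B (node (snd j))),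
      eqv (tr B (nstarI p0) s) s' -> DWB B (branch (fst j) s, branch (snd j) s')
  with dsup j x f => fun s s' e => f (existT _ s (existT _ s' e)) end.
Arguments eqB_branch {A B i} p s s' _.

Fixpoint eqB_symI (A : setoid) (B : setfam A) (i : WB B * WB B) (p : DWB B i) {struct p}
  : DWB B (snd i, fst i).
Proof.
  destruct p as [i x f].
  refine (@dsup _ _ _ _ (snd i, fst i) (ssym x) _).
  intros [b [b' e]]. simpl in b, b', e.
  exact (eqB_symI A B _ (f (existT _ b' (existT _ b (tr_inv e))))).
Qed.

Fixpoint eqB_transI (A : setoid) (B : setfam A) (i : WB B * WB B) (p : DWB B i) {struct p}
  : forall w'', DWB B (snd i, w'') -> DWB B (fst i, w'').
Proof.
  destruct p as [i x f].
  intros w'' q.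
  remember (snd i, w'') as j eqn:Ej.
  destruct q as [j x' g].
  subst j. simpl in x', g.
  refine (@dsup _ _ _ _ (fst i, w'') (strans x x') _).
  intros [b [b'' e]]. simpl in b, b'', e.
  exact (eqB_transI A B _ (f (existT _ b (existT _ (tr B x b) (srefl _)))) _
           (g (existT _ (tr B x b) (existT _ b'' (strans (tr_trans (s:=B) x x' b) e))))).
Qed.

Definition Wset (A : setoid) (B : setfam A) : setoid.
Proof.
  refine (@Setoid {w : WB B & eqB w w} (fun p q => eqB (projT1 p) (projT1 q)) _ _ _).
  - intros [w p]; exact p.
  - intros [w p] [w' p'] q; exact (eqB_symI q).
  - intros [w p] [w' p'] [w'' p''] q q'; exact (eqB_transI q q').
Defined.

Definition nstar (A : setoid) (B : setfam A) (w w' : Wset B) (g : eqv w w')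
  : eqv (node (projT1 w)) (node (projT1 w')) := nstarI g.
Arguments nstar {A B w w'} g.

Lemma bW_ext (A : setoid) (B : setfam A) (w : Wset B) (s s' : B (node (projT1 w))) :
  eqv s s' -> eqB (branch (projT1 w) s) (branch (projT1 w) s').
Proof.
  intros e. apply (eqB_branch (projT2 w)).
  eapply strans; [apply (tr_irr (s:=B) _ (srefl _))|].
  exact (strans (tr_refl (s:=B) s) e).
Qed.

Definition bW (A : setoid) (B : setfam A) (w : Wset B) (s : B (node (projT1 w))) : Wset B :=
  existT (fun v : WB B => eqB v v) (branch (projT1 w) s) (bW_ext (srefl s)).
Arguments bW {A B} w s.

Definition ImS (A : setoid) (B : setfam A) (w : Wset B) : setoid :=
  @Setoid (B (node (projT1 w))) (fun s s' => eqv (bW w s) (bW w s'))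
    (fun s => srefl _) (fun s s' e => ssym e) (fun s s' s'' e e' => strans e e').
Arguments ImS {A B} w.

Lemma ImS_tr_ext (A : setoid) (B : setfam A) (w w' : Wset B) (g : eqv w w')
  (s s' : ImS w) : eqv s s' -> eqv (s := ImS w') (tr B (nstar g) s) (tr B (nstar g) s').
Proof.
  intros e.
  pose proof (eqB_branch g s (tr B (nstar g) s) (srefl _)) as h1.
  pose proof (eqB_branch g s' (tr B (nstar g) s') (srefl _)) as h2.
  exact (eqB_transI (eqB_transI (eqB_symI h1) e) h2).
Qed.

Definition ImS_tr (A : setoid) (B : setfam A) (w w' : Wset B) (g : eqv w w')
  : extfun (ImS w) (ImS w') := @ExtFun (ImS w) (ImS w') (fun s => tr B (nstar g) s) (@ImS_tr_ext A B w w' g).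
Arguments ImS_tr {A B w w'} g.

Definition e_ImS (A : setoid) (B : setfam A) (w : Wset B)
  : extfun (B (node (projT1 w))) (ImS w) :=
  @ExtFun (B (node (projT1 w))) (ImS w) (fun s => s) (fun s s' e => bW_ext e).
Arguments e_ImS {A B} w.

Definition coherent (A : setoid) (B : setfam A) (C : setoid) (w : Wset B)
  (F : forall s : ImS w, extfun (ImS (bW w s)) C) : Type :=
  forall (s s' : ImS w) (sg : eqv s s'),
    eqv (s := funS (ImS (bW w s)) C) (F s) (comp (F s') (ImS_tr sg)).
Arguments coherent {A B C w} F.

Definition CohMaps (A : setoid) (B : setfam A) (C : setoid) (w : Wset B) : setoid.
Proof.
  refine (@Setoid {F : forall s : ImS w, extfun (ImS (bW w s)) C & coherent F}
            (fun F G => forall s, eqv (s := funS (ImS (bW w s)) C) (projT1 F s) (projT1 G s))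
            _ _ _).
  - intros F s; apply srefl.
  - intros F G H s; apply ssym, H.
  - intros F G K H1 H2 s; exact (strans (H1 s) (H2 s)).
Defined.

Definition recst_fun (A : setoid) (B : setfam A) (C : setoid) (aC : extfun (PB B C) C)
  (w : Wset B) (F : CohMaps C w) (s : ImS w) : C :=
  aC (existT (fun a => extfun (B a) C) (node (projT1 (bW w s)))
        (comp (projT1 F s) (e_ImS (bW w s)))).
Arguments recst_fun {A B C} aC {w} F s.

Lemma recst_ext (A : setoid) (B : setfam A) (C : setoid) (aC : extfun (PB B C) C)
  (w : Wset B) (F : CohMaps C w) (s s' : ImS w) :
  eqv s s' -> eqv (recst_fun aC F s) (recst_fun aC F s').
Proof.
  intros sg. apply (ap_ext aC).
  exists (nstar sg). intros t. exact (projT2 F s s' sg t).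
Qed.

Definition recst (A : setoid) (B : setfam A) (C : setoid) (aC : extfun (PB B C) C)
  (w : Wset B) (F : CohMaps C w) : extfun (ImS w) C :=
  @ExtFun (ImS w) C (recst_fun aC F) (@recst_ext A B C aC w F).
Arguments recst {A B C} aC {w} F.

Definition Irec (A : setoid) (B : setfam A) (C : setoid) : Type :=
  {w : Wset B & extfun (ImS w) C}.
Definition Xrec (A : setoid) (B : setfam A) (C : setoid) (aC : extfun (PB B C) C)
  (i : Irec B C) : Type :=
  {F : CohMaps C (projT1 i) & eqv (s := funS (ImS (projT1 i)) C) (projT2 i) (recst aC F)}.
Definition Yrec (A : setoid) (B : setfam A) (C : setoid) (aC : extfun (PB B C) C)
  (i : Irec B C) (x : Xrec aC i) : Type := car (ImS (projT1 i)).
Definition drec (A : setoid) (B : setfam A) (C : setoid) (aC : extfun (PB B C) C)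
  (i : Irec B C) (x : Xrec aC i) (s : Yrec x) : Irec B C :=
  existT (fun w => extfun (ImS w) C) (bW (projT1 i) s) (projT1 (projT1 x) s).

Definition RecDef (A : setoid) (B : setfam A) (C : setoid) (aC : extfun (PB B C) C)
  (w : Wset B) (k : extfun (ImS w) C) : Type :=
  DW (@Xrec A B C aC) (@Yrec A B C aC) (@drec A B C aC)
     (existT (fun w => extfun (ImS w) C) w k).
Arguments RecDef {A B C} aC w k.

(* If k ≈ recst F and k' ≈ recst F', then at
   s and s' := ImS_γ s both sides unfold to a_C applied to the subtrees b w s and
   b w' s'; these are bisimilar by γ itself, so a_C's extensionality reduces the
   claim to F s ≈ F' s' ∘ ImS_(γ_s), which is the induction hypothesis at the
   subderivations for s and s'. *)

Section DWDestructors.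

Context {I : Type} {X : I -> Type} {Y : forall i, X i -> Type}
  {d : forall i (x : X i), Y i x -> I}.

Definition dnode {i : I} (p : DW X Y d i) : X i :=
  match p in DW _ _ _ j return X j with dsup _ x _ => x end.

Definition dbranch {i : I} (p : DW X Y d i) :
  forall y : Y i (dnode p), DW X Y d (d i (dnode p) y) :=
  match p as p0 in DW _ _ _ j return forall y : Y j (dnode p0), DW X Y d (d j (dnode p0) y)
  with dsup _ _ f => f end.

End DWDestructors.

Section RecDefUnique.

Variables (A : setoid) (B : setfam A) (C : setoid) (aC : extfun (PB B C) C).

Definition bW_ImS_tr {w w' : Wset B} (g : eqv w w') (s : ImS w) :
  eqv (bW w s) (bW w' (ImS_tr g s)) :=
  eqB_branch g s _ (srefl _).

Lemma recst_eqv {w w' : Wset B} (F : CohMaps C w) (F' : CohMaps C w')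
  {s : ImS w} {s' : ImS w'} (gs : eqv (bW w s) (bW w' s')) :
  eqv (s := funS _ C) (projT1 F s) (comp (projT1 F' s') (ImS_tr gs)) ->
  eqv (recst aC F s) (recst aC F' s').
Proof.
  intros HF; apply (ap_ext aC).
  exists (nstar gs); exact HF.
Qed.

Lemma RecDef_eqv_ImS_tr (i : Irec B C)
  (r : DW (@Xrec A B C aC) (@Yrec A B C aC) (@drec A B C aC) i) :
  forall (w' : Wset B) (g : eqv (projT1 i) w') (k' : extfun (ImS w') C),
  RecDef aC w' k' -> eqv (s := funS _ C) (projT2 i) (comp k' (ImS_tr g)).
Proof.
  induction r as [i [F HkF] _ IH].
  intros w' g k' r' s; simpl.
  destruct (dnode r') as [F' Hk'F'] eqn:Hr'.
  pose (s' := ImS_tr g s).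
  pose proof (dbranch r' s') as Hsub; rewrite Hr' in Hsub.
  eapply strans; [exact (HkF s)|].
  eapply strans; [|exact (ssym (Hk'F' s'))].
  apply (recst_eqv F F' (bW_ImS_tr g s)).
  exact (IH s _ (bW_ImS_tr g s) _ Hsub).
Qed.

End RecDefUnique.

Arguments RecDef_eqv_ImS_tr {A B C aC i} r {w'} g {k'} _ _.

Theorem proposition3p12 (A : setoid) (B : setfam A) (C : setoid)
  (aC : extfun (PB B C) C)
  (w w' : Wset B) (g : eqv w w')
  (k : extfun (ImS w) C) (k' : extfun (ImS w') C) :
  RecDef aC w k -> RecDef aC w' k' ->
  eqv (s := funS (ImS w) C) k (comp k' (ImS_tr g)).
Proof.
  intros r.
  exact (RecDef_eqv_ImS_tr r g).
Qed.
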